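(* Every factorization curve $\psi_j:\mathbb{P}(V_j)\to\mathbb{P}(\mathfrak{h})$ of a complex factorization structure $\varphi:\mathfrak{h}\to V^*$ is injective.
   Context: $V_1,\ldots,V_m$ are 2-dimensional complex vector spaces, $V^*=V_1^*\otimes\cdots\otimes V_m^*$, $\ell^0$ the annihilator of a line $\ell$, and $\Sigma^0_{j,\ell}=V_1^*\otimes\cdots\otimes\ell^0\otimes\cdots\otimes V_m^*$ ($\ell^0$ in slot $j$). A factorization structure of dimension $m$ is an injective linear map $\varphi:\mathfrak{h}\to V^*$, $\dim\mathfrak{h}=m+1$, with $\dim(\varphi(\mathfrak{h})\cap\Sigma^0_{j,\ell})=1$ for all $j$ and all $\ell$ in a nonempty Zariski-open subset of $\mathbb{P}(V_j)$. The $j$-th factorization curve $\psi_j$ is the unique regular extension to $\mathbb{P}(V_j)$ of the generically defined regular map $\ell\mapsto\varphi^{-1}(\varphi(\mathfrak{h})\cap\Sigma^0_{j,\ell})$. *)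

From HB Require Import structures.
From mathcomp Require Import all_boot all_order all_algebra.
From mathcomp Require Import reals.
From mathcomp.real_closed Require Import complex.

Set Implicit Arguments.
Unset Strict Implicit.
Unset Printing Implicit Defensive.

Import Order.TTheory GRing.Theory Num.Theory.
Local Open Scope ring_scope.

(* Conventions:
   - the complex numbers are R[i] for R : realType (the real numbers);
   - V_j = C^2 (row vectors 'rV_2), a point of P(V_j) is a nonzero u : 'rV_2,
     two representatives give the same point iff (u == v)%MS (same row space);
   - h = C^(m+1) ('rV_(m.+1)), a point of P(h) is a nonzero x : 'rV_(m.+1);
   - V^* = V_1^* (x) ... (x) V_m^* has coordinates T I, I : {ffun 'I_m -> 'I_2},
     w.r.t. the tensor products of the dual bases. *)

Section FactStruct.
Variable C : fieldType.

Definition midx (m : nat) := {ffun 'I_m -> 'I_2}.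

Definition tensor (m : nat) := midx m -> C.

Definition setj (m : nat) (I : midx m) (j : 'I_m) (k : 'I_2) : midx m :=
  [ffun i => if i == j then k else I i].

(* the covector beta_u spanning the annihilator l^0 of the line l = [u]:
   beta_u(e_0) = u_1, beta_u(e_1) = - u_0, so beta_u(u) = 0 *)
Definition annih (u : 'rV[C]_2) (k : 'I_2) : C :=
  if k == 0 then u 0 1 else - u 0 0.

(* Sigma^0_{j,l} = V_1^* (x) .. (x) l^0 (x) .. (x) V_m^*, l = [u]:
   the tensors beta_u (x)_j S with S a tensor in the remaining m-1 factors
   (S is encoded as a tensor not depending on slot j). *)
Definition Sigma0 (m : nat) (j : 'I_m) (u : 'rV[C]_2) (T : tensor m) : Prop :=
  exists S : tensor m,
    (forall I k, S (setj I j k) = S I) /\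
    (forall I, T I = annih u (I j) * S I).

(* phi : h -> V^* is linear; it is encoded by the column vectors
   c I : 'cV_(m+1) with  (phi x) I = (x *m c I) 0 0. *)
Definition phimap (m : nat) (c : midx m -> 'cV[C]_(m.+1))
  (x : 'rV[C]_(m.+1)) : tensor m := fun I => (x *m c I) 0 0.

Definition phi_injective (m : nat) (c : midx m -> 'cV[C]_(m.+1)) : Prop :=
  forall x y : 'rV[C]_(m.+1), phimap c x = phimap c y -> x = y.

Definition preimSigma (m : nat) (c : midx m -> 'cV[C]_(m.+1)) (j : 'I_m)
  (u : 'rV[C]_2) (x : 'rV[C]_(m.+1)) : Prop :=
  Sigma0 j u (phimap c x).

Definition dim_one (n : nat) (P : 'rV[C]_n -> Prop) : Prop :=
  exists x, [/\ x != 0, P x & forall y, P y -> exists a : C, y = a *: x].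

(* Zariski-open subsets of P^1: complements of finite sets (or empty).
   [in_cofinite F u]: u represents a point of P^1 not in the finite set F *)
Definition in_cofinite (F : seq 'rV[C]_2) (u : 'rV[C]_2) : Prop :=
  u != 0 /\ forall v, v \in F -> ~~ (u == v)%MS.

Definition is_fact_struct (m : nat) (c : midx m -> 'cV[C]_(m.+1)) : Prop :=
  phi_injective c /\
  forall j : 'I_m, exists F : seq 'rV[C]_2,
    forall u, in_cofinite F u -> dim_one (preimSigma c j u).

Definition bform (d : nat) (a : 'rV[C]_(d.+1)) (u : 'rV[C]_2) : C :=
  \sum_(k < d.+1) a 0 k * u 0 0 ^+ k * u 0 1 ^+ (d - k).

(* regular maps P^1 -> P^(n-1), given on representatives: well defined on
   points, and locally (on a Zariski-open neighbourhood of each point) given by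
   n homogeneous polynomials of a common degree with no common zero there. *)
Definition regular_P1 (n : nat) (psi : 'rV[C]_2 -> 'rV[C]_n) : Prop :=
  [/\ forall u, u != 0 -> psi u != 0,
      forall u v, u != 0 -> (u == v)%MS -> (psi u == psi v)%MS &
      forall u0, u0 != 0 ->
        exists (d : nat) (a : 'I_n -> 'rV[C]_(d.+1)) (F : seq 'rV[C]_2),
          in_cofinite F u0 /\
          forall u, in_cofinite F u ->
            let p := \row_(i < n) bform (a i) u in
            p != 0 /\ (psi u == p)%MS].

(* psi is a j-th factorization curve: a regular map P(V_j) -> P(h) extending
   the generically defined map l |-> phi^{-1}(phi(h) cap Sigma^0_{j,l}), i.e.
   agreeing with it on a nonempty Zariski-open subset of P(V_j). *)
Definition is_fact_curve (m : nat) (c : midx m -> 'cV[C]_(m.+1)) (j : 'I_m)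
  (psi : 'rV[C]_2 -> 'rV[C]_(m.+1)) : Prop :=
  regular_P1 psi /\
  exists F : seq 'rV[C]_2, forall u, in_cofinite F u ->
    dim_one (preimSigma c j u) /\ preimSigma c j u (psi u).

End FactStruct.

From HB Require Import structures.
From mathcomp Require Import all_boot all_order all_algebra.
From mathcomp Require Import ring.
From mathcomp Require Import reals.
From mathcomp.real_closed Require Import complex.
From Stdlib Require Import FunctionalExtensionality.

(* A tensor of V^* that lies in Sigma^0_{j,[u]} is killed by contracting its
   j-th slot with u.  This closed condition on psi(u) passes from the generic
   lines, where psi(u) lies in Sigma^0_{j,[u]}, to every line: along an affine
   line u0 + t w in V_j the contraction of phi(psi(u)) with u is polynomial in
   t (psi is locally given by binary forms), and it vanishes for all but
   finitely many t.  If now psi(u) and psi(v) are proportional with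
   [u] <> [v], the tensor phi(psi(u)) is killed by contraction with both u and
   v, which span V_j, so it vanishes; injectivity of phi then forces
   psi(u) = 0, which is excluded. *)

Set Implicit Arguments.
Unset Strict Implicit.
Unset Printing Implicit Defensive.

Import Order.TTheory GRing.Theory Num.Theory.
Local Open Scope ring_scope.

Lemma ord2_cases (k : 'I_2) : k = 0 \/ k = 1.
Proof. by case: k => [[|[|//]]] Hk; [left | right]; apply: val_inj. Qed.

Section Det2.
Variable C : fieldType.
Implicit Types u v w : 'rV[C]_2.

Definition det2 u v := u 0 0 * v 0 1 - u 0 1 * v 0 0.

Lemma det2_kernel u v (x0 x1 : C) : det2 u v != 0 ->
  u 0 0 * x0 + u 0 1 * x1 = 0 -> v 0 0 * x0 + v 0 1 * x1 = 0 ->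
  x0 = 0 /\ x1 = 0.
Proof.
move=> nz_d hu hv.
have e0 : x0 * det2 u v = v 0 1 * (u 0 0 * x0 + u 0 1 * x1)
                         - u 0 1 * (v 0 0 * x0 + v 0 1 * x1).
  by rewrite /det2; ring.
have e1 : x1 * det2 u v = u 0 0 * (v 0 0 * x0 + v 0 1 * x1)
                         - v 0 0 * (u 0 0 * x0 + u 0 1 * x1).
  by rewrite /det2; ring.
rewrite hu hv !mulr0 subrr in e0 e1.
by split; apply/eqP; rewrite -(mulIr_eq0 _ (mulIf nz_d)) ?e0 ?e1.
Qed.

Lemma det2_swap u v : det2 v u = - det2 u v.
Proof. by rewrite /det2; ring. Qed.

Lemma rV2_eq0 v : v 0 0 = 0 -> v 0 1 = 0 -> v = 0.
Proof. by move=> h0 h1; apply/rowP => k; rewrite mxE; case: (ord2_cases k) => ->. Qed.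

Lemma submx_det2 u v : (u <= v)%MS -> det2 u v = 0.
Proof. by case/sub_rVP => a ->; rewrite /det2 !mxE; ring. Qed.

Lemma det2_eq0_submx u v : v != 0 -> det2 u v = 0 -> (u <= v)%MS.
Proof.
move=> nz_v d0; apply/sub_rVP.
have [v0 | nz_v0] := eqVneq (v 0 0) 0.
- have nz_v1 : v 0 1 != 0 by apply: contra_neq nz_v; exact: rV2_eq0.
  exists (u 0 1 / v 0 1); apply/rowP => k; rewrite !mxE.
  case: (ord2_cases k) => ->; last by rewrite divfK.
  move/eqP: d0; rewrite /det2 v0 mulr0 subr0 mulf_eq0 (negPf nz_v1) orbF => /eqP ->.
  by rewrite mulr0.
- exists (u 0 0 / v 0 0); apply/rowP => k; rewrite !mxE.
  case: (ord2_cases k) => ->; first by rewrite divfK.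
  apply: (mulIf nz_v0); rewrite mulrAC divfK //.
  by move/eqP: d0; rewrite subr_eq0 mulrC => /eqP ->; rewrite mulrC.
Qed.

Lemma det2_eq0_eqmx u v : u != 0 -> v != 0 -> det2 u v = 0 -> (u == v)%MS.
Proof.
move=> nz_u nz_v d0; apply/andP; split; apply: det2_eq0_submx => //.
by rewrite det2_swap d0 oppr0.
Qed.

Lemma det2_complement u : u != 0 -> exists w, det2 u w != 0.
Proof.
move=> nz_u; have [u0 | nz_u0] := eqVneq (u 0 0) 0.
- exists (\row_k (k == 0)%:R); rewrite /det2 !mxE /= u0 mul0r sub0r mulr1 oppr_eq0.
  by apply: contra_neq nz_u; exact: rV2_eq0.
- by exists (\row_k (k == 1)%:R); rewrite /det2 !mxE /= mulr1 mulr0 subr0.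
Qed.

End Det2.

Section PolyAlongLine.
Variable C : numFieldType.
Variables u0 w : 'rV[C]_2.

Definition poly_along (g : 'rV[C]_2 -> C) :=
  exists q : {poly C}, forall t, q.[t] = g (u0 + t *: w).

Lemma eq_poly_along g h : g =1 h -> poly_along g -> poly_along h.
Proof. by move=> gh [q hq]; exists q => t; rewrite hq gh. Qed.

Lemma poly_alongC a : poly_along (fun=> a).
Proof. by exists a%:P => t; rewrite hornerC. Qed.

Lemma poly_along_coord k : poly_along (fun u => u 0 k).
Proof.
by exists ((u0 0 k)%:P + w 0 k *: 'X) => t; rewrite hornerD hornerZ hornerX hornerC !mxE mulrC.
Qed.

Lemma poly_alongD g h :
  poly_along g -> poly_along h -> poly_along (fun u => g u + h u).
Proof. by move=> [p hp] [q hq]; exists (p + q) => t; rewrite hornerD hp hq. Qed.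

Lemma poly_alongM g h :
  poly_along g -> poly_along h -> poly_along (fun u => g u * h u).
Proof. by move=> [p hp] [q hq]; exists (p * q) => t; rewrite hornerM hp hq. Qed.

Lemma poly_alongX g n : poly_along g -> poly_along (fun u => g u ^+ n).
Proof.
move=> pg; elim: n => [|n IHn]; first exact: poly_alongC.
by apply: eq_poly_along (poly_alongM pg IHn) => u; rewrite exprS.
Qed.

Lemma poly_along_sum (I : Type) (r : seq I) (F : I -> 'rV[C]_2 -> C) :
  (forall i, poly_along (F i)) -> poly_along (fun u => \sum_(i <- r) F i u).
Proof.
move=> pF; elim: r => [|i r IHr].
  by apply: eq_poly_along (poly_alongC 0) => u; rewrite big_nil.
by apply: eq_poly_along (poly_alongD (pF i) IHr) => u; rewrite big_cons.
Qed.

Lemma poly_along_bform d (a : 'rV[C]_d.+1) : poly_along (bform a).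
Proof.
apply: poly_along_sum => k.
by apply: poly_alongM; [apply: poly_alongM; first exact: poly_alongC|];
  apply/poly_alongX/poly_along_coord.
Qed.

Lemma poly_eq0_of_horner (q : {poly C}) : (forall t, q.[t] = 0) -> q = 0.
Proof.
move=> q0; apply: contraTeq isT => nz_q.
have roots : all (root q) [seq k%:R | k <- iota 0 (size q)].
  by apply/allP => x _; apply/eqP.
have uniq_roots : uniq [seq k%:R : C | k <- iota 0 (size q)].
  by rewrite map_inj_uniq ?iota_uniq // => a b /eqP; rewrite eqr_nat => /eqP.
by have := max_poly_roots nz_q roots uniq_roots; rewrite size_map size_iota ltnn.
Qed.

Hypothesis nz_det : det2 u0 w != 0.

(* The points of the line lying on [v] are the roots of this affine
   polynomial in t, which is nonzero by Cramer's rule. *)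
Definition line_meet (v : 'rV[C]_2) : {poly C} :=
  (det2 u0 v)%:P + (det2 w v) *: 'X.

Lemma line_meetE v t : (line_meet v).[t] = det2 (u0 + t *: w) v.
Proof. by rewrite hornerD hornerZ hornerX hornerC /det2 !mxE; ring. Qed.

Lemma line_meet_neq0 v : v != 0 -> line_meet v != 0.
Proof.
apply: contra_neq => L0.
have at0 : det2 u0 v = 0.
  by have := congr1 (coefp 0) L0; rewrite /= coefD coefC coefZ coefX mulr0 addr0 coef0.
have at1 : det2 w v = 0.
  by have := congr1 (coefp 1) L0; rewrite /= coefD coefC coefZ coefX mulr1 add0r coef0.
have := det2_kernel (x0 := v 0 1) (x1 := - v 0 0) nz_det.
rewrite !mulrN -/(det2 u0 v) -/(det2 w v) => /(_ at0 at1) [v1 v0].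
by apply: rV2_eq0 => //; rewrite -[LHS]opprK v0 oppr0.
Qed.

Lemma line_nonzero t : u0 + t *: w != 0.
Proof.
apply: contra_neq nz_det => ut0.
have : det2 (u0 + t *: w) w = det2 u0 w by rewrite /det2 !mxE; ring.
by rewrite ut0 /det2 !mxE !mul0r subrr.
Qed.

Lemma poly_along_cofinite_eq0 (G : seq 'rV[C]_2) g :
  poly_along g -> (forall u, in_cofinite G u -> g u = 0) -> g u0 = 0.
Proof.
move=> [q hq] g0.
have vanish t : (q * \prod_(v <- G | v != 0) line_meet v).[t] = 0.
  rewrite hornerM horner_prod.
  have [-> | ] := eqVneq (\prod_(v <- G | v != 0) (line_meet v).[t]) 0.
    by rewrite mulr0.
  rewrite prodf_seq_neq0 => /allP off_G.
  rewrite hq g0 ?mul0r //; split=> [|v vG]; first exact: line_nonzero.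
  have [v0 | nz_v] := eqVneq v 0.
    by rewrite v0; apply: contra (line_nonzero t) => /andP [/submx0null ->].
  by have := off_G v vG; rewrite nz_v line_meetE /=; apply: contra => /andP [/submx_det2 ->].
move/poly_eq0_of_horner/eqP: vanish; rewrite mulf_eq0 prodf_seq_eq0 => /orP [/eqP q0 |].
  by rewrite -(addr0 u0) -(scale0r w) -hq q0 horner0.
by case/hasP => v _ /andP [nz_v /eqP L0]; case/negP: (line_meet_neq0 nz_v); rewrite L0.
Qed.

End PolyAlongLine.

Section Contraction.
Variables (C : fieldType) (m : nat) (j : 'I_m).

Definition contract (u : 'rV[C]_2) (T : tensor C m) : tensor C m :=
  fun I => u 0 0 * T (setj I j 0) + u 0 1 * T (setj I j 1).

Lemma setj_j (I : midx m) k : setj I j k j = k.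
Proof. by rewrite ffunE eqxx. Qed.

Lemma setj_id (I : midx m) : setj I j (I j) = I.
Proof. by apply/ffunP => i; rewrite ffunE; case: eqP => [->|]. Qed.

Lemma Sigma0_contract u T : Sigma0 j u T -> forall I, contract u T I = 0.
Proof. by case=> S [S_j T_S] I; rewrite /contract !T_S !setj_j !S_j /annih /=; ring. Qed.

Lemma contract_phimapZ (c : midx m -> 'cV[C]_m.+1) u b x I :
  contract u (phimap c (b *: x)) I = b * contract u (phimap c x) I.
Proof. by rewrite /contract /phimap -!scalemxAl !mxE; ring. Qed.

Lemma contract_eq0_tensor u v T : det2 u v != 0 ->
  (forall I, contract u T I = 0) -> (forall I, contract v T I = 0) ->
  forall I, T I = 0.
Proof.
move=> nz_d Tu Tv I; have [T0 T1] := det2_kernel nz_d (Tu I) (Tv I).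
by rewrite -(setj_id I); case: (ord2_cases (I j)) => ->.
Qed.

End Contraction.

Section FactorizationCurve.
Variables (C : numFieldType) (m : nat) (c : midx m -> 'cV[C]_m.+1) (j : 'I_m).
Variable psi : 'rV[C]_2 -> 'rV[C]_m.+1.
Hypothesis psi_curve : is_fact_curve c j psi.

Lemma poly_along_contract u0 w d (a : 'I_m.+1 -> 'rV[C]_d.+1) I :
  poly_along u0 w (fun u => contract j u (phimap c (\row_i bform (a i) u)) I).
Proof.
have phi_poly J : poly_along u0 w (fun u => phimap c (\row_i bform (a i) u) J).
  apply: eq_poly_along (poly_along_sum (index_enum 'I_m.+1) _) => [u|r].
    by rewrite /phimap !mxE; apply: eq_bigr => r _; rewrite mxE.
  exact/poly_alongM/poly_alongC/poly_along_bform.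
by apply: poly_alongD; apply: poly_alongM; apply: poly_along_coord || apply: phi_poly.
Qed.

Lemma fact_curve_contract u0 : u0 != 0 ->
  forall I, contract j u0 (phimap c (psi u0)) I = 0.
Proof.
case: psi_curve => [[_ _ psi_reg] [F psiF]] nz_u0 I.
have [w nz_det] := det2_complement nz_u0.
have [d [a [F' [u0F' psi_loc]]]] := psi_reg u0 nz_u0.
have loc_contract u : in_cofinite F' u -> contract j u (phimap c (psi u)) I = 0 ->
    contract j u (phimap c (\row_i bform (a i) u)) I = 0.
  case/psi_loc => _ /andP [_ /sub_rVP [b ->]].
  by rewrite contract_phimapZ => ->; rewrite mulr0.
have : contract j u0 (phimap c (\row_i bform (a i) u0)) I = 0.
  apply: (poly_along_cofinite_eq0 (G := F ++ F') nz_det (poly_along_contract u0 w a I)).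
  move=> u [nz_u uFF'].
  have uF : in_cofinite F u by split=> // v vF; apply: uFF'; rewrite mem_cat vF.
  have uF' : in_cofinite F' u by split=> // v vF'; apply: uFF'; rewrite mem_cat vF' orbT.
  by apply/loc_contract/Sigma0_contract => //; case: (psiF u uF).
have [_ /andP [/sub_rVP [b ->] _]] := psi_loc u0 u0F'.
by rewrite contract_phimapZ => ->; rewrite mulr0.
Qed.

Lemma fact_curve_injective : phi_injective c ->
  forall u v, u != 0 -> v != 0 -> (psi u == psi v)%MS -> (u == v)%MS.
Proof.
move=> phi_inj u v nz_u nz_v /andP [_ /sub_rVP [a psi_v]].
have [[psi_nz _ _] _] := psi_curve.
have [d0 | nz_d] := eqVneq (det2 u v) 0; first exact: det2_eq0_eqmx.
have nz_a : a != 0 by apply: contra_neq (psi_nz v nz_v) => a0; rewrite psi_v a0 scale0r.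
have Tv I : contract j v (phimap c (psi u)) I = 0.
  by apply: (mulfI nz_a); rewrite -contract_phimapZ -psi_v mulr0 fact_curve_contract.
have T0 := contract_eq0_tensor nz_d (fact_curve_contract nz_u) Tv.
case/eqP: (psi_nz u nz_u); apply: phi_inj; apply: functional_extensionality => I.
by rewrite T0 /phimap mul0mx mxE.
Qed.

End FactorizationCurve.

Theorem corollary2p7 (R : realType) (m : nat)
  (c : midx m -> 'cV[R[i]]_(m.+1)) (j : 'I_m)
  (psi : 'rV[R[i]]_2 -> 'rV[R[i]]_(m.+1)) :
  is_fact_struct c -> is_fact_curve c j psi ->
  forall u v : 'rV[R[i]]_2, u != 0 -> v != 0 ->
    (psi u == psi v)%MS -> (u == v)%MS.
Proof. by move=> [phi_inj _] psi_curve; exact: fact_curve_injective psi_curve phi_inj. Qed.
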